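(* Let $\{\lambda_j\}_{j\in\mathbb N}$ be a non-increasing sequence of non-negative reals with $\lim_{j\to\infty}\lambda_j=0$. Then $$\lim_{j\to\infty}\frac{\ln(\ln\frac1{\lambda_j})}{\ln(\ln j)}=\infty$$ holds if and only if for every $\delta>0$, $$\lim_{j\to\infty}\frac{(\ln\frac1{\lambda_j})^{\alpha}}{\ln j}=\infty\quad\text{for all }\alpha\in(0,\delta).$$
   Context: If $\lambda_j=0$, $\ln\frac1{\lambda_j}$ is interpreted as $\infty$. *)

From HB Require Import structures.
From mathcomp Require Import all_boot all_order all_algebra.
From mathcomp Require Import all_classical all_reals all_analysis.
Set Implicit Arguments. Unset Strict Implicit. Unset Printing Implicit Defensive.
Import Order.TTheory GRing.Theory Num.Theory.
Local Open Scope ring_scope.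
Local Open Scope ereal_scope.

(* ln (1/l) as an extended real, with the paper's convention ln(1/0) = +oo *)
Definition lninv {R : realType} (l : R) : \bar R :=
  if l == 0%R then +oo else (ln (l^-1))%:E.

Definition lnE {R : realType} (x : \bar R) : \bar R :=
  match x with
  | r%:E => (ln r)%:E
  | +oo => +oo
  | -oo => -oo
  end.

Definition powE {R : realType} (x : \bar R) (a : R) : \bar R :=
  match x with
  | r%:E => (r `^ a)%:E
  | +oo => +oo
  | -oo => -oo
  end.

From HB Require Import structures.
From mathcomp Require Import all_boot all_order all_algebra.
From mathcomp Require Import all_classical all_reals all_analysis.
Import Order.TTheory GRing.Theory Num.Theory.
Import numFieldNormedType.Exports.
Local Open Scope classical_set_scope.
Local Open Scope ring_scope.

(* Write L_j = ln (1/lam_j) and l_j = ln j.  If ln L_j >= (2/alpha) ln l_j,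
   then L_j^alpha >= l_j^2, hence L_j^alpha / l_j >= l_j, which tends to +oo.
   Conversely, taking alpha = 1/M, L_j^(1/M) >= l_j gives ln L_j >= M ln l_j. *)

Section LogRatios.
Context {R : realType}.

Lemma ler_powR_ln (x y a : R) : 0 < x -> 0 < y ->
  (x <= y `^ a) = (ln x <= a * ln y).
Proof. by move=> x0 y0; rewrite -ln_powR ler_ln ?posrE ?powR_gt0. Qed.

Lemma lninv_gt0 (l : R) : 0 <= l < 1 -> (0 < lninv l)%E.
Proof.
case/andP; rewrite le_eqVlt => /predU1P[<- _|l0 l1]; first by rewrite /lninv eqxx.
by rewrite /lninv gt_eqF // lte_fin ln_gt0 // invf_gt1.
Qed.

Lemma near_ln_natr_gt (B : R) : \forall j \near \oo, B < ln (j%:R : R).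
Proof.
apply: filterS ((cvgryPgt _).1 (@cvgr_idn R) (expR B)) => j Bj.
rewrite -(expRK B) ltr_ln // posrE ?expR_gt0 //.
exact: lt_trans (expR_gt0 B) Bj.
Qed.

Lemma powE_ratio_ge (x : \bar R) (l a : R) : (0 < x)%E -> 1 < l -> 0 < a ->
  ((2 / a)%:E <= lnE x * (ln l)^-1%:E)%E -> (l%:E <= powE x a * l^-1%:E)%E.
Proof.
have l_gt0 : 1 < l -> 0 < l by apply: lt_trans.
case: x => [r||] //= r_gt0 l_gt1 a_gt0; last first.
  by move=> _; rewrite gt0_mulye ?leey // lte_fin invr_gt0 l_gt0.
rewrite lte_fin in r_gt0; rewrite -!EFinM !lee_fin ler_pdivlMr ?ln_gt0 //.
rewrite mulrAC ler_pdivrMr // => lnl2_le.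
rewrite ler_pdivlMr ?l_gt0 // -expr2 ler_powR_ln ?exprn_gt0 ?l_gt0 //.
by rewrite lnXn ?l_gt0 // -mulr_natl (mulrC a).
Qed.

Lemma lnE_ratio_ge (x : \bar R) (l M : R) : (0 < x)%E -> 1 < l -> 0 < M ->
  (1%:E <= powE x M^-1 * l^-1%:E)%E -> (M%:E <= lnE x * (ln l)^-1%:E)%E.
Proof.
have l_gt0 : 1 < l -> 0 < l by apply: lt_trans.
case: x => [r||] //= r_gt0 l_gt1 M_gt0; last first.
  by move=> _; rewrite gt0_mulye ?leey // lte_fin invr_gt0 ln_gt0.
rewrite lte_fin in r_gt0; rewrite -!EFinM !lee_fin.
rewrite ler_pdivlMr ?l_gt0 // mul1r ler_powR_ln ?l_gt0 // => lnl_le.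
by rewrite ler_pdivlMr ?ln_gt0 // -ler_pdivlMl // mulrC.
Qed.

End LogRatios.

Theorem lemma4 (R : realType) (lam : nat -> R)
  (lam_ge0 : forall j, 0 <= lam j)
  (lam_noninc : forall i j : nat, (i <= j)%N -> lam j <= lam i)
  (lam_cvg0 : lam @ \oo --> 0) :
  ((fun j : nat => (lnE (lninv (lam j)) * ((ln (ln j%:R))^-1)%:E)%E)
     @ \oo --> +oo%E)
  <->
  (forall delta : R, 0 < delta ->
     forall alpha : R, 0 < alpha < delta ->
       (fun j : nat => (powE (lninv (lam j)) alpha * ((ln j%:R)^-1)%:E)%E)
         @ \oo --> +oo%E).
Proof.
have lninv_lam_gt0 : \forall j \near \oo, (0 < lninv (lam j))%E.
  near=> j; apply: lninv_gt0; rewrite lam_ge0 /=.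
  by near: j; exact: cvgr_lt lam_cvg0 _ ltr01.
split=> [/cvgeyPge lnln_ratio_ge delta _ alpha /andP[alpha_gt0 _]|pow_ratio_cvgy].
  apply/cvgeyPge => A; near=> j.
  have /andP[A_lt lnj_gt1] : (A < ln (j%:R : R)) && (1 < ln (j%:R : R)).
    by rewrite -gt_max; near: j; exact: near_ln_natr_gt.
  apply: (@le_trans _ _ (ln j%:R)%:E); first by rewrite lee_fin ltW.
  apply: powE_ratio_ge alpha_gt0 _.
  - by near: j.
  - exact: lnj_gt1.
  - by near: j; exact: lnln_ratio_ge.
apply/cvgeyPge => A; pose M := Num.max A 1.
have M_gt0 : 0 < M by rewrite lt_max ltr01 orbT.
have Minv_gt0 : 0 < M^-1 by rewrite invr_gt0.
have /cvgey_ge/(_ 1) pow_ratio_ge1 : (fun j => (powE (lninv (lam j)) M^-1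
    * ((ln j%:R)^-1)%:E)%E) @ \oo --> +oo%E.
  apply: (pow_ratio_cvgy (M^-1 + 1)); first exact: addr_gt0.
  by rewrite Minv_gt0 ltrDl ltr01.
near=> j.
apply: (@le_trans _ _ M%:E); first by rewrite lee_fin le_max lexx.
apply: lnE_ratio_ge M_gt0 _.
- by near: j.
- by near: j; exact: near_ln_natr_gt.
- by near: j.
Unshelve. all: end_near.
Qed.
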